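(* Fix a dynamic environment and suppose the agent is myopic. For any mechanism $M=(\pi,p)$ that is IC for a myopic agent, there is another mechanism $M'=(\pi',p')$ that is IC for a myopic agent (and is IR whenever $M$ is) such that (i) $u_P^{M'}(\emptyset)\ge u_P^M(\emptyset)$, and (ii) for all $h\in\mathcal H$ and $s\in\mathcal S$, $\pi'(h,s)$ and $p'(h,s)$ depend only on $|h|$, $s_p$, $a_p$ and $s$, where $(s_p,a_p)=\mathrm{last}(h)$. Moreover, this holds regardless of whether payments are allowed and of which IR constraints (none, overall, dynamic) are required.
   Context: A dynamic environment consists of a time horizon $T\in\mathbb N$, a finite state space $\mathcal S$, a finite action space $\mathcal A$, valuation functions $v^P_t,v^A_t:\mathcal S\times\mathcal A\to\mathbb R$ ($t\in[T]$) of the principal and the agent, an initial distribution $P_0\in\Delta(\mathcal S)$, and transition operators $P_t:\mathcal S\times\mathcal A\to\Delta(\mathcal S)$ with $P_t(s,a,s')$ the probability of next state $s'$ after action $a$ in state $s$ at time $t$. For $t\ge1$, $\mathcal H_t$ is the set of sequences $(s_1,a_1,\dots,s_t,a_t)$; $\mathcal H_0=\{\emptyset\}$; $\mathcal H=\bigcup_{t=0}^{T-1}\mathcal H_t$; $h+(s,a)$ appends $(s,a)$; for $h=(s_1,a_1,\dots,s_t,a_t)$, $\mathrm{last}(h)=(s_t,a_t)$, and $\mathrm{last}(\emptyset)$ is an arbitrary fixed state-action pair. A mechanism $M=(\pi,p)$ has $\pi:\mathcal H\times\mathcal S\to\Delta(\mathcal A)$ and payments $p:\mathcal H\times\mathcal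 S\to\mathbb R$ (agent to principal; $p\equiv0$ if payments are not allowed). Principal's onward utility: $u_P^M(h,s)=\sum_a\pi(h,s,a)\big(v^P_{|h|+1}(s,a)+\sum_{s'}P_{|h|+1}(s,a,s')u_P^M(h+(s,a),s')\big)+p(h,s)$ (zero when $|h|=T$), $u_P^M(\emptyset)=\sum_sP_0(s)u_P^M(\emptyset,s)$. Myopic agent's utility: $u_A^M(h,s)=\sum_a\pi(h,s,a)v^A_{|h|+1}(s,a)-p(h,s)$. A reporting strategy $r:\mathcal H\times\mathcal S\to\mathcal S$ induces for $h=(s_1,a_1,\dots,s_t,a_t)$ the reported history $r(h)=(s'_1,a_1,\dots,s'_t,a_t)$ with $s'_i=r((s_1,a_1,\dots,s_{i-1},a_{i-1}),s_i)$, and $u_A^{M,r}(h,s)=\sum_a\pi(r(h),r(h,s),a)v^A_{|h|+1}(s,a)-p(r(h),r(h,s))$. $M$ is IC for a myopic agent if for all $h\in\mathcal H,s\in\mathcal S$ and every $r$ with $r(h',s')=s'$ whenever $|h'|<|h|$, $u_A^M(h,s)\ge u_A^{M,r}(h,s)$. Overall IR: $\sum_sP_0(s)u_A^M(\emptyset,s)\ge0$; dynamic IR: $u_A^M(h,s)\ge0$ for all $h\in\mathcal H,s\in\mathcal S$. *)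

From mathcomp Require Import all_boot all_order all_algebra.
Set Implicit Arguments. Unset Strict Implicit. Unset Printing Implicit Defensive.
Import Order.TTheory GRing.Theory Num.Theory.
Local Open Scope ring_scope.

(* Histories h = (s_1,a_1,...,s_t,a_t) are sequences [:: (s_1,a_1); ...; (s_t,a_t)],
   h + (s,a) is [rcons h (s,a)], |h| is [size h].  Time indices t in [T] are
   1-based: at history h the current period is (size h).+1.
   A mechanism is a pair of functions (pi, p); only their values on
   H = {h | size h < T} matter. *)

Section Dyn.
Variables (R : realFieldType) (S A : finType) (T : nat).
Local Notation hist := (seq (S * A)).
Variables (vP vA : nat -> S -> A -> R) (P0 : S -> R) (Pt : nat -> S -> A -> S -> R).

Definition is_env : Prop :=
  [/\ (forall s, 0 <= P0 s), \sum_s P0 s = 1 &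
      forall t s a, (1 <= t <= T)%N ->
        (forall s', 0 <= Pt t s a s') /\ \sum_s' Pt t s a s' = 1].

Definition is_mech (pi : hist -> S -> A -> R) : Prop :=
  forall h s, (size h < T)%N -> (forall a, 0 <= pi h s a) /\ \sum_a pi h s a = 1.

Definition payments_ok (allowed : bool) (p : hist -> S -> R) : Prop :=
  ~~ allowed -> forall h s, (size h < T)%N -> p h s = 0.

Fixpoint uP_fuel (pi : hist -> S -> A -> R) (p : hist -> S -> R)
    (k : nat) (h : hist) (s : S) : R :=
  if k is k'.+1 then
    \sum_a pi h s a * (vP (size h).+1 s a +
       \sum_s' Pt (size h).+1 s a s' * uP_fuel pi p k' (rcons h (s, a)) s')
    + p h s
  else 0.

Definition uP pi p (h : hist) (s : S) : R := uP_fuel pi p (T - size h) h s.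

Definition uP0 pi p : R := \sum_s P0 s * uP pi p [::] s.

Definition uA (pi : hist -> S -> A -> R) (p : hist -> S -> R) (h : hist) (s : S) : R :=
  \sum_a pi h s a * vA (size h).+1 s a - p h s.

(* Reported history r(h): s'_i = r((s_1,a_1,...,s_{i-1},a_{i-1}), s_i);
   [pre] is the true prefix already processed. *)
Fixpoint report_aux (r : hist -> S -> S) (pre : hist) (h : hist) : hist :=
  match h with
  | [::] => [::]
  | (s, a) :: h' => (r pre s, a) :: report_aux r (rcons pre (s, a)) h'
  end.

Definition report (r : hist -> S -> S) (h : hist) : hist := report_aux r [::] h.

Definition uAr (pi : hist -> S -> A -> R) (p : hist -> S -> R)
    (r : hist -> S -> S) (h : hist) (s : S) : R :=
  \sum_a pi (report r h) (r h s) a * vA (size h).+1 s a - p (report r h) (r h s).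

Definition IC (pi : hist -> S -> A -> R) (p : hist -> S -> R) : Prop :=
  forall h s, (size h < T)%N ->
  forall r : hist -> S -> S,
    (forall h' s', (size h' < size h)%N -> r h' s' = s') ->
    uAr pi p r h s <= uA pi p h s.

Definition overall_IR pi p : Prop := 0 <= \sum_s P0 s * uA pi p [::] s.

Definition dynamic_IR pi p : Prop :=
  forall h s, (size h < T)%N -> 0 <= uA pi p h s.

(* pi(h,s) and p(h,s) depend only on |h|, last(h) and s (h in H);
   d is the fixed pair last(emptyset). *)
Definition last_markov (d : S * A) (pi : hist -> S -> A -> R) (p : hist -> S -> R) : Prop :=
  forall h1 h2 s, (size h1 < T)%N -> (size h2 < T)%N ->
    size h1 = size h2 -> last d h1 = last d h2 ->
    (forall a, pi h1 s a = pi h2 s a) /\ p h1 s = p h2 s.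

End Dyn.

Inductive IR_kind := NoIR | OverallIR | DynamicIR.

Definition IR (R : realFieldType) (S A : finType) (vA : nat -> S -> A -> R)
    (P0 : S -> R) (T : nat) (k : IR_kind)
    (pi : seq (S * A) -> S -> A -> R) (p : seq (S * A) -> S -> R) : Prop :=
  match k with
  | NoIR => True
  | OverallIR => overall_IR vA P0 pi p
  | DynamicIR => dynamic_IR T vA pi p
  end.

From mathcomp Require Import all_boot all_order all_algebra.
From mathcomp Require Import zify.
Import Order.TTheory GRing.Theory Num.Theory.
Local Open Scope ring_scope.
Set Implicit Arguments. Unset Strict Implicit.

(* The new mechanism is [M o phi] for a length-preserving map [phi] on
   histories, so every menu it offers is a menu that [M] offers at some history
   of the same length.  A myopic agent only faces the current menu, hence
   feasibility, payment restrictions, IC and every IR notion transfer from [M].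
   The map [phi] is built by backward induction on the period m = T-1, ..., 1:
   once [M o phi] only depends on the last state-action pair after period m,
   the principal's onward utility at a history of length m only depends on the
   menu offered there, so every history of length m with last pair x may be
   sent to a history of length m maximising the principal's utility in
   expectation over the state drawn from P_m(x). *)

Section Reindexing.
Variables (R : realFieldType) (S A : finType) (T : nat) (vA : nat -> S -> A -> R).
Local Notation hist := (seq (S * A)).

Lemma report_aux_id (r : hist -> S -> S) (pre h : hist) :
  (forall h' s', (size h' < size pre + size h)%N -> r h' s' = s') ->
  report_aux r pre h = h.
Proof.
elim: h pre => [//|[s a] h IH] pre r_id /=.
rewrite r_id /=; last by lia.
by rewrite IH // => h' s'; rewrite size_rcons => ?; apply: r_id => /=; lia.
Qed.

(* Reports about the past are truthful, so only the current report matters. *)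
Lemma ICP (pi : hist -> S -> A -> R) (p : hist -> S -> R) :
  IC T vA pi p <->
  (forall h s s', (size h < T)%N ->
     \sum_a pi h s' a * vA (size h).+1 s a - p h s' <= uA vA pi p h s).
Proof.
split=> [ic h s s' lt_hT | ic h s lt_hT r r_id].
  pose r h0 s0 := if h0 == h then s' else s0.
  have r_id h0 s0 : (size h0 < size h)%N -> r h0 s0 = s0.
    by rewrite /r; case: eqP => // -> ; rewrite ltnn.
  by have := ic h s lt_hT r r_id; rewrite /uAr /report report_aux_id // /r eqxx.
by rewrite /uAr /report report_aux_id //; apply: ic.
Qed.

Variables (P0 : S -> R) (pi : hist -> S -> A -> R) (p : hist -> S -> R).
Variables (phi : hist -> hist) (phi_size : {mono phi : h / size h}).

Lemma phi_nil : phi [::] = [::].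
Proof. exact/size0nil/phi_size. Qed.

Lemma uA_comp h s : uA vA (pi \o phi) (p \o phi) h s = uA vA pi p (phi h) s.
Proof. by rewrite /uA phi_size. Qed.

Lemma is_mech_comp : is_mech T pi -> is_mech T (pi \o phi).
Proof. by move=> mech h s; rewrite -(phi_size h); apply: mech. Qed.

Lemma payments_ok_comp allowed :
  payments_ok T allowed p -> payments_ok T allowed (p \o phi).
Proof. by move=> pay no_pay h s; rewrite -(phi_size h); apply: pay. Qed.

Lemma IC_comp : IC T vA pi p -> IC T vA (pi \o phi) (p \o phi).
Proof.
move=> /ICP ic; apply/ICP => h s s'; rewrite uA_comp -(phi_size h).
exact: ic.
Qed.

Lemma IR_comp k : IR vA P0 T k pi p -> IR vA P0 T k (pi \o phi) (p \o phi).
Proof.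
case: k => //= ir => [|h s]; last by rewrite uA_comp -(phi_size h); apply: ir.
by rewrite /overall_IR; under eq_bigr do rewrite uA_comp phi_nil.
Qed.

End Reindexing.

Section PrincipalUtility.
Variables (R : realFieldType) (S A : finType) (T : nat).
Variables (vP : nat -> S -> A -> R) (Pt : nat -> S -> A -> S -> R).
Local Notation hist := (seq (S * A)).

Lemma uP_fuel_ext pi1 p1 pi2 p2 k (h1 h2 : hist) :
  size h1 = size h2 ->
  (forall e : hist, (size e < k)%N ->
     pi1 (h1 ++ e) = pi2 (h2 ++ e) /\ p1 (h1 ++ e) = p2 (h2 ++ e)) ->
  forall s, uP_fuel vP Pt pi1 p1 k h1 s = uP_fuel vP Pt pi2 p2 k h2 s.
Proof.
elim: k h1 h2 => [//|k IH] h1 h2 eq_size eq_menu s /=.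
have := eq_menu [::] isT; rewrite !cats0 => -[-> ->].
rewrite eq_size; congr (_ + _); apply: eq_bigr => a _.
congr (_ * (_ + _)); apply: eq_bigr => s' _; congr (_ * _).
apply: IH => [|e lt_ek]; first by rewrite !size_rcons eq_size.
by rewrite !cat_rcons; apply: eq_menu.
Qed.

Definition expected_uP pi p t (x : S * A) (h : hist) : R :=
  \sum_s' Pt t x.1 x.2 s' * uP T vP Pt pi p h s'.

Lemma uPE pi p (h : hist) s : (size h < T)%N ->
  uP T vP Pt pi p h s =
  \sum_a pi h s a * (vP (size h).+1 s a +
                     expected_uP pi p (size h).+1 (s, a) (rcons h (s, a)))
  + p h s.
Proof.
move=> lt_hT; rewrite /uP -(subnSK lt_hT) /=; congr (_ + _).
apply: eq_bigr => a _; congr (_ * (_ + _)); apply: eq_bigr => s' _.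
by rewrite /uP size_rcons.
Qed.

Lemma ler_uP pi1 p1 pi2 p2 (h : hist) s : (size h < T)%N ->
  (forall a, 0 <= pi1 h s a) -> pi1 h = pi2 h -> p1 h = p2 h ->
  (forall a, expected_uP pi1 p1 (size h).+1 (s, a) (rcons h (s, a)) <=
             expected_uP pi2 p2 (size h).+1 (s, a) (rcons h (s, a))) ->
  uP T vP Pt pi1 p1 h s <= uP T vP Pt pi2 p2 h s.
Proof.
move=> lt_hT pi1_ge0 eq_pi eq_p le_next; rewrite !uPE // -eq_pi -eq_p lerD2r.
by apply: ler_sum => a _; rewrite ler_wpM2l // lerD2l.
Qed.

End PrincipalUtility.

Section BackwardInduction.
Variables (R : realFieldType) (S A : finType) (T : nat).
Variables (vP : nat -> S -> A -> R) (P0 : S -> R) (Pt : nat -> S -> A -> S -> R).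
Variables (d : S * A) (pi : seq (S * A) -> S -> A -> R) (p : seq (S * A) -> S -> R).
Hypotheses (env : is_env T P0 Pt) (mech : is_mech T pi).
Local Notation hist := (seq (S * A)).

Definition markov_from m (phi : hist -> hist) :=
  forall h1 h2 : hist, (m <= size h1 < T)%N -> size h1 = size h2 ->
    last d h1 = last d h2 -> phi h1 = phi h2.

Definition best_history pi1 p1 m (x : S * A) : m.-tuple (S * A) :=
  [arg max_(t > nseq_tuple m d) expected_uP T vP Pt pi1 p1 m x t]%O.

Lemma Pt_ge0 t s a s' : (0 < t <= T)%N -> 0 <= Pt t s a s'.
Proof. by case: env => _ _ /(_ t s a) Pt_distr /Pt_distr[]. Qed.

Section Jump.
Variables (m : nat) (phi : hist -> hist).
Hypotheses (m_gt0 : (0 < m)%N) (lt_mT : (m < T)%N).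
Hypotheses (phi_size : {mono phi : h / size h}) (phi_markov : markov_from m.+1 phi).
Local Notation pi1 := (pi \o phi).
Local Notation p1 := (p \o phi).

Definition jump (h : hist) : hist :=
  if size h == m then tval (best_history pi1 p1 m (last d h)) else h.

Lemma jump_id h : size h != m -> jump h = h.
Proof. by rewrite /jump => /negbTE ->. Qed.

Lemma size_jump : {mono jump : h / size h}.
Proof. by move=> h; rewrite /jump; case: eqP => [->|//]; rewrite size_tuple. Qed.

Lemma markov_from_jump : markov_from m (phi \o jump).
Proof.
move=> h1 h2 /andP[le_mh lt_hT] eq_size eq_last /=.
have [/eqP size_m|ne_m] := boolP (size h1 == m).
  by rewrite /jump -eq_size size_m eqxx eq_last.
rewrite !jump_id -?eq_size //; apply: phi_markov => //.
by rewrite lt_hT andbT ltn_neqAle eq_sym ne_m.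
Qed.

(* After period m both mechanisms coincide and only depend on the last pair. *)
Lemma uP_jump h : size h = m ->
  uP T vP Pt (pi1 \o jump) (p1 \o jump) h =1 uP T vP Pt pi1 p1 (jump h).
Proof.
move=> size_h s; rewrite /uP size_jump size_h.
apply: uP_fuel_ext => [|[|x e] lt_e]; first by rewrite size_jump.
  by rewrite !cats0.
rewrite /= jump_id ?size_cat ?size_h /=; last by lia.
suff -> : phi (h ++ x :: e) = phi (jump h ++ x :: e) by [].
apply: phi_markov; rewrite ?size_cat ?size_jump ?size_h ?last_cat //=.
by move: lt_e => /=; lia.
Qed.

Lemma ler_uP_jump (h : hist) s : (size h < m)%N ->
  (forall a,
     expected_uP T vP Pt pi1 p1 (size h).+1 (s, a) (rcons h (s, a)) <=
     expected_uP T vP Pt (pi1 \o jump) (p1 \o jump) (size h).+1 (s, a) (rcons h (s, a))) ->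
  uP T vP Pt pi1 p1 h s <= uP T vP Pt (pi1 \o jump) (p1 \o jump) h s.
Proof.
move=> lt_hm; have lt_hT : (size h < T)%N by lia.
apply: ler_uP; rewrite /= ?jump_id ?neq_ltn ?lt_hm //.
by have [pi1_ge0 _] := is_mech_comp phi_size mech s lt_hT.
Qed.

(* Maximality of [best_history] gives the base case at period m; earlier
   periods inherit the improvement because transition probabilities are
   nonnegative. *)
Lemma expected_uP_jump i (h : hist) x : (size h + i.+1 = m)%N ->
  expected_uP T vP Pt pi1 p1 (size h).+1 x (rcons h x) <=
  expected_uP T vP Pt (pi1 \o jump) (p1 \o jump) (size h).+1 x (rcons h x).
Proof.
elim: i h x => [|i IH] h x size_h.
  have size_hx : size (rcons h x) == m by rewrite size_rcons -size_h addn1.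
  have -> : (size h).+1 = m by rewrite -size_h addn1.
  rewrite /expected_uP; under [X in _ <= X]eq_bigr do rewrite uP_jump ?(eqP size_hx) //.
  rewrite /jump size_hx last_rcons /best_history; case: arg_maxP => // t _ t_max.
  exact: (t_max (Tuple size_hx)).
apply: ler_sum => s' _; apply: ler_wpM2l; first by apply: Pt_ge0; lia.
apply: ler_uP_jump => [|a]; first by rewrite size_rcons; lia.
by apply: IH; rewrite size_rcons; lia.
Qed.

Lemma uP0_jump : uP0 T vP P0 Pt pi1 p1 <= uP0 T vP P0 Pt (pi1 \o jump) (p1 \o jump).
Proof.
apply: ler_sum => s _; apply: ler_wpM2l; first by case: env => P0_ge0 _ _.
by apply: ler_uP_jump => // a; apply: (@expected_uP_jump m.-1); rewrite prednK.
Qed.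

End Jump.

Lemma exists_markov_reindex m : (0 < m)%N ->
  exists2 phi : hist -> hist, {mono phi : h / size h} &
    markov_from m phi /\ uP0 T vP P0 Pt pi p <= uP0 T vP P0 Pt (pi \o phi) (p \o phi).
Proof.
move=> m_gt0; move Tm: (T - m)%N => k.
elim: k m Tm m_gt0 => [|k IH] m Tm m_gt0.
  by exists id => //; split => // h1 h2 /andP[? ?]; lia.
have [phi phi_size [phi_markov le_phi]] := IH m.+1 ltac:(lia) isT.
have lt_mT : (m < T)%N by lia.
exists (phi \o jump m phi); first by move=> h; rewrite /= phi_size size_jump.
split; first exact: markov_from_jump.
exact: le_trans le_phi (uP0_jump m_gt0 lt_mT phi_size phi_markov).
Qed.

Lemma last_markov_comp phi : markov_from 1 phi -> last_markov T d (pi \o phi) (p \o phi).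
Proof.
move=> phi_markov h1 h2 s lt_h1T _ eq_size eq_last.
suff eq_phi : phi h1 = phi h2 by rewrite /= eq_phi.
case: h1 eq_size eq_last lt_h1T => [|x h1] eq_size eq_last lt_h1T.
  by move/esym/size0nil: eq_size => ->.
by apply: phi_markov.
Qed.

End BackwardInduction.

Theorem lemma6 (R : realFieldType) (S A : finType) (T : nat)
    (vP vA : nat -> S -> A -> R) (P0 : S -> R) (Pt : nat -> S -> A -> S -> R)
    (d : S * A) (allowed : bool)
    (pi : seq (S * A) -> S -> A -> R) (p : seq (S * A) -> S -> R) :
  is_env T P0 Pt ->
  is_mech T pi -> payments_ok T allowed p -> IC T vA pi p ->
  exists (pi' : seq (S * A) -> S -> A -> R) (p' : seq (S * A) -> S -> R),
    [/\ is_mech T pi', payments_ok T allowed p', IC T vA pi' p'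
      & (forall k : IR_kind, IR vA P0 T k pi p -> IR vA P0 T k pi' p')] /\
    uP0 T vP P0 Pt pi p <= uP0 T vP P0 Pt pi' p' /\
    last_markov T d pi' p'.
Proof.
move=> env mech pay ic.
have [phi phi_size [phi_markov le_uP0]] :=
  exists_markov_reindex vP d p env mech (isT : (0 < 1)%N).
exists (pi \o phi), (p \o phi); split; last by split; last exact: last_markov_comp.
split.
- exact: is_mech_comp.
- exact: payments_ok_comp.
- exact: IC_comp.
- by move=> k; apply: IR_comp.
Qed.
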